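(* Let $\gamma,\lambda\in(0,1)$, $0\le a<b<\infty$ and $H>1$. Let $g:\mathbb R^d\to\mathbb R$ be a bounded, nonnegative, continuous function with $g(x)\le H$ and $|g(x)-g(y)|\le H|x-y|^\gamma$ for all $x,y\in\mathbb R^d$. Then for every $R>1$ and every $r$ with $$0<r<\frac Rb\wedge\Big[\frac1{b-a}\Big(2^{-\frac{\gamma+1}{\gamma}}H^{-\frac d\gamma}R^{d-1}\frac{d\pi^{d/2}}{\Gamma(d/2+1)}\Big)^{\frac1{\gamma+d-1}}\Big],$$ we have $$\Big(\int_{R+ar<|x|<R+br}g(x)\,dx\Big)^{\frac{\gamma\lambda+d}{\gamma+d}}\le N\,R^{\frac{d(d-1)}{\gamma+d}}\big(r(b-a)\big)^{-\frac{d(\gamma+d-1)}{\gamma+d}}\int_{R+ar<|x|<R+br}g(x)^\lambda\,dx,$$ where $N=N(\gamma,\lambda,d,H)$.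
   Context: $\Gamma$ denotes the Gamma function; all integrals are with respect to Lebesgue measure on $\mathbb R^d$. *)

From HB Require Import structures.
From mathcomp Require Import all_boot all_order all_algebra.
From mathcomp Require Import all_classical all_reals all_analysis.
Set Implicit Arguments. Unset Strict Implicit. Unset Printing Implicit Defensive.
Import Order.TTheory GRing.Theory Num.Theory.
Import numFieldNormedType.Exports.
Local Open Scope classical_set_scope.
Local Open Scope ring_scope.

(** Pushforward (image) measure, packaged with the measurability proof of
    the map so that it carries a canonical measure structure. *)
Definition pushm d1 d2 (T1 : measurableType d1) (T2 : measurableType d2)
  (R : realType) (m : {measure set T1 -> \bar R}) (f : T1 -> T2)
  (mf : measurable_fun [set: T1] f) : set T2 -> \bar R := pushforward m f.

Section pushm_measure.
Local Open Scope ereal_scope.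
Context d1 d2 (T1 : measurableType d1) (T2 : measurableType d2) (R : realType).
Variables (m : {measure set T1 -> \bar R}) (f : T1 -> T2).
Hypothesis mf : measurable_fun [set: T1] f.

Let pushm0 : pushm m mf set0 = 0.
Proof. by rewrite /pushm /pushforward preimage_set0 measure0. Qed.

Let pushm_ge0 A : 0 <= pushm m mf A.
Proof. by rewrite /pushm /pushforward; exact: measure_ge0. Qed.

Let pushm_sigma_additive : semi_sigma_additive (pushm m mf).
Proof.
move=> F mF tF mUF; rewrite /pushm /pushforward preimage_bigcup.
apply: measure_semi_sigma_additive.
- by move=> n; rewrite -[X in measurable X]setTI; exact: mf.
- apply/trivIsetP => /= i j _ _ ij; rewrite -preimage_setI.
  by move/trivIsetP : tF => /(_ _ _ _ _ ij) ->//; rewrite preimage_set0.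
- by rewrite -preimage_bigcup -[X in measurable X]setTI; exact: mf.
Qed.

HB.instance Definition _ := isMeasure.Build _ _ _
  (pushm m mf) pushm0 pushm_ge0 pushm_sigma_additive.
End pushm_measure.

(** R^n is represented by [n.-tuple R] with the product sigma-algebra
    (generated by the coordinate maps). *)
Section Rn.
Context {R : realType}.

Definition tcons n (p : n.-tuple R * R) : n.+1.-tuple R :=
  [tuple of p.2 :: p.1].

Lemma measurable_tcons n : measurable_fun [set: n.-tuple R * R] (@tcons n).
Proof. exact: measurable_cons. Qed.

(** Lebesgue measure on R^n: the n-fold product of the Lebesgue measure on R
    (R^0 is a point, carrying the Dirac mass); R^(n+1) = R^n x R, transported
    along (t, x) |-> x :: t. *)
Fixpoint lebesgue_Rn (n : nat) : {measure set (n.-tuple R) -> \bar R} :=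
  match n with
  | 0 => @dirac _ (0.-tuple R) [tuple] R
  | n.+1 => pushm ((lebesgue_Rn n \x (@lebesgue_measure R))%E)
                  (@measurable_tcons n)
  end.

Definition norm_Rn n (x : n.-tuple R) : R :=
  Num.sqrt (\sum_(i < n) (tnth x i) ^+ 2).

Definition dist_Rn n (x y : n.-tuple R) : R :=
  Num.sqrt (\sum_(i < n) (tnth x i - tnth y i) ^+ 2).

Definition continuous_Rn n (f : n.-tuple R -> R) : Prop :=
  forall x (e : R), 0 < e -> exists2 del : R, 0 < del &
    forall y, dist_Rn x y < del -> `|f x - f y| < e.

Definition Gamma (s : R) : R :=
  Rintegral (@lebesgue_measure R) `]0, +oo[%classic
    (fun t => t `^ (s - 1) * expR (- t)).

Definition annulus n (R1 R2 : R) : set (n.-tuple R) :=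
  [set x | R1 < norm_Rn x < R2].
End Rn.

From HB Require Import structures.
From mathcomp Require Import all_boot all_order all_algebra.
From mathcomp Require Import all_classical all_reals all_analysis.
From mathcomp Require Import ring lra.
Import Order.TTheory GRing.Theory Num.Theory.
Import numFieldNormedType.Exports.
Local Open Scope classical_set_scope.
Local Open Scope ring_scope.
Set Implicit Arguments. Unset Strict Implicit. Unset Printing Implicit Defensive.

(* Let m be the supremum of g on the annulus A.  As g <= m on A, the integral
   M of g is at most m^(1-lam) times the integral L of g^lam.  Near a point
   where g > m/2 the Hoelder bound keeps g above m/4 on a ball of radius
   (m/(4H))^(1/gam); a cube lying in this ball and in A, of side comparable to
   the smaller of that radius and the width r(b-a) of A, bounds L from below
   by (m/4)^lam times its volume.  Eliminating m between the two bounds, and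
   using the upper bound on r in the form (r(b-a))^(gam+d-1) < c R^(d-1),
   gives the claim. *)

(* Nonnegative integrals are suprema of integrals of simple functions below the
   integrand, so these comparisons need no measurability of the integrands. *)
Section ge0_integral_comparison.
Local Open Scope ereal_scope.
Context d (T : measurableType d) (R : realType) (mu : {measure set T -> \bar R}).
Import HBNNSimple.

Lemma ge0_le_integral_patch (D E : set T) (f g : T -> \bar R) :
  (forall x, D x -> 0 <= f x) -> (forall x, E x -> 0 <= g x) ->
  (forall x, (f \_ D) x <= (g \_ E) x) ->
  \int[mu]_(x in D) f x <= \int[mu]_(x in E) g x.
Proof.
move=> f0 g0 fg; rewrite (ge0_integralE _ f0) (ge0_integralE _ g0) /=.
apply: ereal_sup_le => _ [h hf <-]; exists h => //= x.
exact: le_trans (hf x) (fg x).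
Qed.

Lemma ge0_integralZl_le (D : set T) (f : T -> \bar R) (k : R) : (0 < k)%R ->
  (forall x, D x -> 0 <= f x) ->
  \int[mu]_(x in D) (k%:E * f x) <= k%:E * \int[mu]_(x in D) f x.
Proof.
move=> k0 f0.
have kf0 x : D x -> 0 <= k%:E * f x.
  by move=> Dx; apply: mule_ge0; [rewrite lee_fin ltW|apply: f0].
rewrite (ge0_integralE mu kf0) (ge0_integralE mu f0) /=.
apply: ge_ereal_sup => _ [h hf <-].
have ki0 : (0 <= k^-1)%R by rewrite invr_ge0 ltW.
pose h' := scale_nnsfun h ki0.
have -> : sintegral mu h = k%:E * sintegral mu h'.
  rewrite -sintegralrM; apply: eq_sintegral => x /=.
  by rewrite mulrA mulfV ?gt_eqF// mul1r.
rewrite lee_pmul2l ?lte_fin//; apply: ereal_sup_ubound; exists h' => //= x.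
have := hf x; rewrite /patch; case: ifP => _ hx.
  rewrite -(@lee_pmul2l _ k%:E) ?lte_fin//.
  by rewrite -EFinM mulrA mulfV ?gt_eqF// mul1r.
by rewrite lee_fin mulr_ge0_le0 // -lee_fin.
Qed.

Lemma bounded_integral_le_powR (D : set T) (f : T -> R) (m l : R) :
  (0 < m)%R -> (0 <= l <= 1)%R -> (forall x, D x -> 0 <= f x <= m)%R ->
  \int[mu]_(x in D) (f x)%:E <=
    (m `^ (1 - l))%:E * \int[mu]_(x in D) (f x `^ l)%:E.
Proof.
move=> m0 /andP[l0 l1] fm.
have ml0 : (0 < m `^ (1 - l))%R by rewrite powR_gt0.
apply: le_trans (ge0_integralZl_le ml0 _); last by move=> x _; rewrite lee_fin powR_ge0.
apply: ge0_le_integral_patch => [x /fm /andP[]|x _|x]; rewrite ?lee_fin //.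
  by rewrite mulr_ge0 ?powR_ge0 // ltW.
rewrite /patch; case: ifP => [/set_mem/fm/andP[fx0 fxm]|_] //.
rewrite lee_fin; have [->|fx_gt0] := eqVneq (f x) 0%R.
  by rewrite mulr_ge0 ?powR_ge0 // ltW.
have {}fx_gt0 : (0 < f x)%R by rewrite lt_def fx_gt0.
have fxE : f x = (f x `^ l * f x `^ (1 - l))%R.
  by rewrite -powRD ?(gt_eqF fx_gt0) ?implybT // subrKC powRr1 // ltW.
rewrite {1}fxE mulrC ler_wpM2r ?powR_ge0 //.
by apply: ge0_ler_powR; rewrite ?nnegrE ?subr_ge0 // ltW.
Qed.

Lemma Rintegral_gt0_exists (D : set T) (f : T -> R) :
  (forall x, D x -> 0 <= f x)%R -> (0 < Rintegral mu D f)%R ->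
  exists2 x, D x & (0 < f x)%R.
Proof.
move=> f0 If_gt0; apply: contrapT => f_le0; move: If_gt0.
rewrite /Rintegral integral0_eq ?ltxx // => x Dx; congr (_%:E); apply/eqP.
rewrite eq_le f0 // andbT leNgt; apply/negP => fx_gt0; apply: f_le0.
by exists x.
Qed.

End ge0_integral_comparison.

Section cube.
Context {R : realType}.

Definition cube n (c : 'I_n -> R) (s : R) : set (n.-tuple R) :=
  [set x | forall i, `|tnth x i - c i| < s].

Lemma measurable_cube n (c : 'I_n -> R) (s : R) : measurable (cube c s).
Proof.
have -> : cube c s = \bigcap_(i in [set: 'I_n])
    ((fun x => tnth x i) @^-1` `]c i - s, c i + s[%classic).
  apply/seteqP; split => x /=.
    by move=> cx i _ /=; rewrite in_itv /=; have := cx i; rewrite ltr_norml; lra.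
  by move=> cx i; have := cx i I; rewrite /= in_itv /= ltr_norml; lra.
apply: fin_bigcap_measurable; first exact: (@finite_finset (ordinal n) setT).
by move=> i _; rewrite -[X in measurable X]setTI; exact: measurable_tnth.
Qed.

Lemma tnth_tcons0 n (p : n.-tuple R * R) : tnth (tcons p) ord0 = p.2.
Proof. by rewrite (tnth_nth 0). Qed.

Lemma tnth_tconsS n (p : n.-tuple R * R) i :
  tnth (tcons p) (lift ord0 i) = tnth p.1 i.
Proof. by rewrite /tcons tnthS. Qed.

Lemma lebesgue_Rn_cube n (c : 'I_n -> R) (s : R) : 0 < s ->
  lebesgue_Rn n (cube c s) = ((2 * s) ^+ n)%:E.
Proof.
move=> s0; elim: n c => [|n IH] c.
  rewrite /= diracE expr0.
  by have -> : [tuple] \in cube c s by apply/mem_set => -[].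
rewrite /= /pushm /pushforward.
have -> : @tcons R n @^-1` cube c s =
    cube (fun i => c (lift ord0 i)) s `*` `]c ord0 - s, c ord0 + s[%classic.
  apply/seteqP; split => -[t x] /=.
    move=> cx; split; first by move=> i; have := cx (lift ord0 i); rewrite tnth_tconsS.
    by rewrite in_itv /=; have := cx ord0; rewrite ltr_norml tnth_tcons0 /=; lra.
  move=> [ct cx] i; case: (unliftP ord0 i) => [j ->|->].
    by rewrite tnth_tconsS; exact: ct.
  by move: cx; rewrite in_itv /= ltr_norml tnth_tcons0 /=; lra.
rewrite product_measure1E; [|exact: measurable_cube|exact: measurable_itv].
rewrite IH exprSr EFinM; congr (_ * _)%E.
apply: eq_trans; first exact: (lebesgue_measure_itv `](c ord0 - s), (c ord0 + s)[).
by rewrite /= lte_fin ifT; [congr (_%:E)|]; lra.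
Qed.

End cube.

Section euclidean_norm.
Context {R : realType}.

Definition enorm n (f : 'I_n -> R) := Num.sqrt (\sum_(i < n) f i ^+ 2).

Lemma enorm_ge0 n (f : 'I_n -> R) : 0 <= enorm f.
Proof. exact: sqrtr_ge0. Qed.

Lemma sum_mul_le_enorm n (a b : 'I_n -> R) :
  \sum_(i < n) a i * b i <= enorm a * enorm b.
Proof.
rewrite /enorm; set A := \sum_(i < n) a i ^+ 2; set B := \sum_(i < n) b i ^+ 2.
set S := \sum_(i < n) a i * b i.
have A0 : 0 <= A by apply: sumr_ge0 => i _; exact: sqr_ge0.
have B0 : 0 <= B by apply: sumr_ge0 => i _; exact: sqr_ge0.
have SAB : S ^+ 2 <= A * B.
  have [A_eq0|A_neq0] := eqVneq A 0.
    have a0 i : a i = 0.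
      apply/eqP; rewrite -sqrf_eq0; apply/eqP.
      by apply: (psumr_eq0P (fun j _ => sqr_ge0 (a j)) A_eq0).
    by rewrite /S big1 ?expr0n ?mulr_ge0// => i _; rewrite a0 mul0r.
  have A_gt0 : 0 < A by rewrite lt_def A_neq0 A0.
  (* Lagrange: A (A B - S^2) is the sum of the squares of A b_i - S a_i. *)
  have : 0 <= A * (A * B - S ^+ 2).
    have -> : A * (A * B - S ^+ 2) = \sum_(i < n) (A * b i - S * a i) ^+ 2.
      have E i : (A * b i - S * a i) ^+ 2 =
          A ^+ 2 * b i ^+ 2 + (- (2 * A * S)) * (a i * b i) + S ^+ 2 * a i ^+ 2.
        by ring.
      rewrite (eq_bigr _ (fun i _ => E i)) !big_split /= -!mulr_sumr.
      by rewrite /A /B /S; ring.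
    by apply: sumr_ge0 => i _; exact: sqr_ge0.
  by rewrite pmulr_rge0 // subr_ge0.
rewrite -sqrtrM //; apply: le_trans (ler_norm S) _.
by rewrite -(sqrtr_sqr S) ler_sqrt // mulr_ge0.
Qed.

Lemma enorm_triangle n (a b c : 'I_n -> R) : (forall i, c i = a i + b i) ->
  enorm c <= enorm a + enorm b.
Proof.
move=> cE; have := sum_mul_le_enorm a b; rewrite /enorm.
set A := \sum_(i < n) a i ^+ 2; set B := \sum_(i < n) b i ^+ 2 => CS.
have A0 : 0 <= A by apply: sumr_ge0 => i _; exact: sqr_ge0.
have B0 : 0 <= B by apply: sumr_ge0 => i _; exact: sqr_ge0.
have -> : \sum_(i < n) c i ^+ 2 = A + B + 2 * \sum_(i < n) a i * b i.
  rewrite /A /B mulr_sumr -!big_split /=; apply: eq_bigr => i _; rewrite cE; ring.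
have AB0 : 0 <= Num.sqrt A + Num.sqrt B by rewrite addr_ge0 ?sqrtr_ge0.
rewrite -(ger0_norm AB0) -sqrtr_sqr ler_sqrt ?sqr_ge0 // sqrrD !sqr_sqrtr //.
lra.
Qed.

Lemma enormZ n (k : R) (f g : 'I_n -> R) : (forall i, g i = k * f i) ->
  enorm g = `|k| * enorm f.
Proof.
move=> gE; rewrite /enorm.
have -> : \sum_(i < n) g i ^+ 2 = k ^+ 2 * \sum_(i < n) f i ^+ 2.
  by rewrite mulr_sumr; apply: eq_bigr => i _; rewrite gE exprMn.
by rewrite sqrtrM ?sqr_ge0 // sqrtr_sqr.
Qed.

Lemma ler_norm_enorm n (f : 'I_n -> R) i : `|f i| <= enorm f.
Proof.
rewrite /enorm -(sqrtr_sqr (f i)) ler_sqrt; last by apply: sumr_ge0 => j _; exact: sqr_ge0.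
rewrite (bigD1 i) //= lerDl; apply: sumr_ge0 => j _; exact: sqr_ge0.
Qed.

Lemma enorm_le_cube n (f : 'I_n -> R) (s : R) : 0 <= s ->
  (forall i, `|f i| <= s) -> enorm f <= n%:R * s.
Proof.
move=> s0 fs; rewrite /enorm -(ger0_norm (mulr_ge0 (ler0n _ n) s0)) -sqrtr_sqr.
rewrite ler_sqrt ?sqr_ge0 //; apply: (@le_trans _ _ (\sum_(i < n) s ^+ 2)).
  apply: ler_sum => i _; rewrite -real_normK ?num_real //.
  by rewrite lerXn2r ?nnegrE ?normr_ge0.
rewrite sumr_const card_ord exprMn -[_ *+ n]mulr_natl ler_wpM2r ?sqr_ge0 //.
by case: n {f fs} => [|n]; rewrite ?sqr_ge0 // expr2 ler_peMl ?ler1n // ler0n.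
Qed.

(* The cube is centred on the ray through x0, at distance dl from x0 towards
   the middle of the annulus; its half-side dl/(2n) keeps it within dl/2 of its
   centre. *)
Lemma annulus_cube n (x0 : n.-tuple R) (R1 R2 dl : R) : (0 < n)%N ->
  0 <= R1 -> annulus R1 R2 x0 -> 0 < dl -> 4 * dl <= R2 - R1 ->
  exists c : 'I_n -> R, forall z, cube c (dl / (2 * n%:R)) z ->
    annulus R1 R2 z /\ dist_Rn x0 z < 2 * dl.
Proof.
move=> n0 R10 /andP[R1x0 x0R2] dl0 hdl.
set nx := norm_Rn x0 in R1x0 x0R2.
have nx0 : 0 < nx by lra.
pose t := if nx <= (R1 + R2) / 2 then nx + dl else nx - dl.
have tE : (nx <= (R1 + R2) / 2 /\ t = nx + dl) \/ ((R1 + R2) / 2 < nx /\ t = nx - dl).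
  by rewrite /t; case: ifP => h; [left|right; rewrite ltNge h].
have t0 : 0 < t by case: tE => -[]; lra.
pose c i := t / nx * tnth x0 i.
exists c => z zc.
have c_norm : enorm c = t.
  rewrite (enormZ (k := t / nx) (f := fun i => tnth x0 i)) // ger0_norm ?divr_ge0 ?ltW //.
  by rewrite -[enorm _]/nx mulfVK // gt_eqF.
have x0c : enorm (fun i => tnth x0 i - c i) = dl.
  rewrite (enormZ (k := 1 - t / nx) (f := fun i => tnth x0 i)); last by move=> i; rewrite /c; ring.
  have -> : 1 - t / nx = (nx - t) / nx by field; rewrite gt_eqF.
  rewrite -[enorm _]/nx normrM [`|nx^-1|]ger0_norm ?invr_ge0 ?ltW // mulfVK ?gt_eqF //.
  by case: tE => -[_ ->]; [rewrite ler0_norm|rewrite ger0_norm]; lra.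
have zc' : enorm (fun i => tnth z i - c i) <= dl / 2.
  apply: le_trans (enorm_le_cube (s := dl / (2 * n%:R)) _ _) _.
  - by rewrite divr_ge0 ?ltW // mulr_gt0 ?ltr0n.
  - by move=> i; apply: ltW; exact: zc.
  by rewrite le_eqVlt; apply/orP; left; apply/eqP; field; rewrite pnatr_eq0 -lt0n.
have cz : enorm (fun i => c i - tnth z i) <= dl / 2.
  rewrite (enormZ (k := -1) (f := fun i => tnth z i - c i)) ?normrN1 ?mul1r //.
  by move=> i; ring.
have z_le : enorm (fun i => tnth z i) <= enorm c + enorm (fun i => tnth z i - c i).
  by apply: enorm_triangle => i; ring.
have z_ge : enorm c <= enorm (fun i => tnth z i) + enorm (fun i => c i - tnth z i).
  by apply: enorm_triangle => i; ring.
have x0z : enorm (fun i => tnth x0 i - tnth z i) <=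
    enorm (fun i => tnth x0 i - c i) + enorm (fun i => c i - tnth z i).
  by apply: enorm_triangle => i; rewrite addrA subrK.
split; last by rewrite -[dist_Rn x0 z]/(enorm _); lra.
apply/andP; rewrite -[norm_Rn z]/(enorm (fun i => tnth z i)).
by case: tE => -[? ?]; split; lra.
Qed.

End euclidean_norm.

Section annulus_integrals.
Context {R : realType}.
Local Open Scope ereal_scope.

Lemma annulus_integral_ge n (R1 R2 c dl : R) (f : n.-tuple R -> R) (x0 : n.-tuple R) :
  (0 < n)%N -> (0 <= R1)%R -> annulus R1 R2 x0 -> (0 < dl)%R ->
  (4 * dl <= R2 - R1)%R -> (forall x, 0 <= f x)%R -> (0 <= c)%R ->
  (forall y, dist_Rn x0 y < 2 * dl -> c <= f y)%R ->
  (c * (dl / n%:R) ^+ n)%:E <= \int[lebesgue_Rn n]_(x in annulus R1 R2) (f x)%:E.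
Proof.
move=> n0 R10 Ax0 dl0 hdl f0 c0 fc.
have [cc Qcc] := annulus_cube n0 R10 Ax0 dl0 hdl.
set s := (dl / (2 * n%:R))%R in Qcc.
have s0 : (0 < s)%R by rewrite divr_gt0 // mulr_gt0 // ltr0n.
have -> : (c * (dl / n%:R) ^+ n)%:E = \int[lebesgue_Rn n]_(x in cube cc s) (cst c%:E) x.
  rewrite integral_cst; last exact: measurable_cube.
  rewrite (lebesgue_Rn_cube cc s0) -EFinM.
  by congr (_ * _ ^+ _)%:E; rewrite /s; field; rewrite pnatr_eq0 -lt0n.
apply: ge0_le_integral_patch => [x _|x _|x]; rewrite ?lee_fin //.
rewrite /patch; case: ifP => [/set_mem/Qcc[Ax dx]|_]; last by case: ifP; rewrite lee_fin.
by rewrite ifT ?lee_fin ?fc //; exact: mem_set.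
Qed.

Lemma annulus_integral_le n (R1 R2 M : R) (f : n.-tuple R -> R) : (0 < R2)%R ->
  (0 <= M)%R -> (forall x, 0 <= f x <= M)%R ->
  \int[lebesgue_Rn n]_(x in annulus R1 R2) (f x)%:E <= (M * (2 * R2) ^+ n)%:E.
Proof.
move=> R20 M0 fM.
have -> : (M * (2 * R2) ^+ n)%:E =
    \int[lebesgue_Rn n]_(x in cube (fun=> 0%R) R2) (cst M%:E) x.
  by rewrite integral_cst ?lebesgue_Rn_cube //; exact: measurable_cube.
apply: ge0_le_integral_patch => [x _|x _|x]; rewrite ?lee_fin //; first by case/andP: (fM x).
rewrite /patch; case: ifP => [/set_mem/andP[_ xR2]|_]; last by case: ifP; rewrite lee_fin.
rewrite ifT ?lee_fin; first by case/andP: (fM x).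
apply: mem_set => i /=; rewrite subr0.
exact: le_lt_trans (ler_norm_enorm (fun i => tnth x i) i) xR2.
Qed.

Lemma annulus_RintegralE n (R1 R2 M : R) (f : n.-tuple R -> R) : (0 < R2)%R ->
  (0 <= M)%R -> (forall x, 0 <= f x <= M)%R ->
  (Rintegral (lebesgue_Rn n) (annulus R1 R2) f)%:E =
     \int[lebesgue_Rn n]_(x in annulus R1 R2) (f x)%:E.
Proof.
move=> R20 M0 fM; rewrite /Rintegral fineK // ge0_fin_numE.
  exact: le_lt_trans (annulus_integral_le _ R20 M0 fM) (ltry _).
by apply: integral_ge0 => x _; rewrite lee_fin; case/andP: (fM x).
Qed.

End annulus_integrals.

Section holder_estimate.
Context {R : realType}.

Lemma holder_lower_bound n (gam H m : R) (g : n.-tuple R -> R) (x0 y : n.-tuple R) :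
  0 < gam -> 0 < H -> 0 < m ->
  (forall x y, `|g x - g y| <= H * dist_Rn x y `^ gam) ->
  m / 2 < g x0 -> dist_Rn x0 y < (m / (4 * H)) `^ gam^-1 -> m / 4 <= g y.
Proof.
move=> gam0 H0 m0 holder gx0 x0y.
have mH0 : 0 <= m / (4 * H) by rewrite divr_ge0 ?mulr_ge0 ?ltW.
have : dist_Rn x0 y `^ gam < ((m / (4 * H)) `^ gam^-1) `^ gam.
  apply: gt0_ltr_powR; rewrite ?nnegrE ?powR_ge0 //.
  exact: (enorm_ge0 (fun i => tnth x0 i - tnth y i)).
rewrite -powRrM mulVf ?gt_eqF // powRr1 // -(ltr_pM2l H0).
have -> : H * (m / (4 * H)) = m / 4 by field; rewrite gt_eqF.
by have := holder x0 y; rewrite ler_norml => /andP[_]; lra.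
Qed.

Lemma annulus_holder_estimate n (R1 R2 gam lam H : R) (g : n.-tuple R -> R) :
  (0 < n)%N -> 0 <= R1 -> R1 < R2 -> 0 < gam -> 0 <= lam <= 1 -> 0 < H ->
  (forall x, 0 <= g x <= H) ->
  (forall x y, `|g x - g y| <= H * dist_Rn x y `^ gam) ->
  0 < Rintegral (lebesgue_Rn n) (annulus R1 R2) g ->
  exists2 m, 0 < m <= H &
    Rintegral (lebesgue_Rn n) (annulus R1 R2) g <=
      m `^ (1 - lam) * Rintegral (lebesgue_Rn n) (annulus R1 R2) (fun x => g x `^ lam)
    /\ (m / 4) `^ lam *
         (Num.min ((m / (4 * H)) `^ gam^-1 / 2) ((R2 - R1) / 4) / n%:R) ^+ n <=
       Rintegral (lebesgue_Rn n) (annulus R1 R2) (fun x => g x `^ lam).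
Proof.
move=> n0 R10 R12 gam0 /andP[lam0 lam1] H0 gH holder M_gt0.
set A := annulus R1 R2.
have R20 : 0 < R2 by lra.
have glam x : 0 <= g x `^ lam <= H `^ lam.
  by have /andP[? ?] := gH x; rewrite powR_ge0 ge0_ler_powR ?nnegrE // ltW.
have [x1 Ax1 gx1] := Rintegral_gt0_exists (fun x _ => proj1 (andP (gH x))) M_gt0.
have gA_sup : has_sup [set g x | x in A].
  by split; [exists (g x1), x1|exists H => _ [x _ <-]; case/andP: (gH x)].
pose m := sup [set g x | x in A].
have gm x : A x -> 0 <= g x <= m.
  move=> Ax; have /andP[-> _] := gH x.
  by apply: sup_upper_bound => //; exists x.
have m_gt0 : 0 < m by have /andP[_] := gm _ Ax1; exact: lt_le_trans.
have mH : m <= H.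
  by apply: ge_sup; [exists (g x1), x1|move=> _ [x _ <-]; case/andP: (gH x)].
have [_ [x0 Ax0 <-] gx0] := sup_adherent (divr_gt0 m_gt0 (ltr0n _ 2)) gA_sup.
have {}gx0 : m / 2 < g x0 by rewrite -/m in gx0; lra.
exists m; first by rewrite m_gt0.
set dl := Num.min _ _.
have dl0 : 0 < dl by rewrite lt_min !divr_gt0 ?subr_gt0 // powR_gt0 // divr_gt0 ?mulr_gt0.
have dl_w : 2 * dl <= (m / (4 * H)) `^ gam^-1.
  have : dl <= (m / (4 * H)) `^ gam^-1 / 2 by rewrite ge_min lexx.
  lra.
have dl_R : 4 * dl <= R2 - R1.
  have : dl <= (R2 - R1) / 4 by rewrite ge_min lexx orbT.
  lra.
split.
  rewrite -lee_fin EFinM (annulus_RintegralE _ R20 (ltW H0) gH).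
  rewrite (annulus_RintegralE _ R20 (powR_ge0 H lam) glam).
  by apply: bounded_integral_le_powR; rewrite ?lam0.
rewrite -lee_fin (annulus_RintegralE _ R20 (powR_ge0 H lam) glam).
apply: (annulus_integral_ge (x0 := x0)) => // [x||y x0y]; rewrite ?powR_ge0 //.
apply: ge0_ler_powR; rewrite // ?nnegrE.
- by rewrite divr_ge0 // ltW.
- by case/andP: (gH y).
by apply: (holder_lower_bound gam0 H0 m_gt0 holder gx0); lra.
Qed.

End holder_estimate.

(* After taking logarithms, with x = ln M, y = ln L, u = ln m, t = ln rho and
   s = ln Rad, both cases of the final estimate are linear inequalities. *)
Section power_bound.
Context {R : realType}.
Variables (gam lam H c0 : R) (d : nat).
Hypotheses (gam01 : 0 < gam < 1) (lam01 : 0 < lam < 1) (d_gt0 : (0 < d)%N)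
  (H_gt0 : 0 < H).

Let D : R := d%:R.

Let D_ge1 : 1 <= D. Proof. by rewrite ler1n. Qed.

Lemma holder_case_ln (c k : R) : exists K, forall x y u t s,
  x <= (1 - lam) * u + y -> (gam * lam + D) * u + c <= gam * y ->
  (gam + D - 1) * t < k + (D - 1) * s ->
  (gam * lam + D) * x <=
    (gam + D) * K + D * (D - 1) * s - D * (gam + D - 1) * t + (gam + D) * y.
Proof.
have /andP[gam0 _] := gam01; have /andP[lam0 lam1] := lam01; have D1 := D_ge1.
exists ((D * k - (1 - lam) * c) / (gam + D)) => x y u t s hM hL hrho.
have {}hM : (gam * lam + D) * x <= (gam * lam + D) * ((1 - lam) * u + y).
  by rewrite ler_wpM2l // addr_ge0 ?mulr_ge0 //; lra.
have {}hL : (1 - lam) * ((gam * lam + D) * u + c) <= (1 - lam) * (gam * y).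
  by rewrite ler_wpM2l //; lra.
have {}hrho : D * ((gam + D - 1) * t) < D * (k + (D - 1) * s).
  by rewrite ltr_pM2l //; lra.
rewrite [(gam + D) * _]mulrC divfK; [lra|rewrite gt_eqF //; lra].
Qed.

Lemma width_case_ln (c k h : R) : exists K, forall x y u t s,
  x <= (1 - lam) * u + y -> lam * u + D * t + c <= y -> u <= h ->
  (gam + D - 1) * t < k + (D - 1) * s -> 0 <= s ->
  (gam * lam + D) * x <=
    (gam + D) * K + D * (D - 1) * s - D * (gam + D - 1) * t + (gam + D) * y.
Proof.
have /andP[gam0 _] := gam01; have /andP[lam0 lam1] := lam01; have D1 := D_ge1.
have gD1 : 0 < gam + D - 1 by lra.
pose e := (D - 1 + gam * lam) / (gam + D - 1).
have e1 : e <= 1 by rewrite ler_pdivrMr // mul1r; nra.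
have De : D * (D - 1 + gam * lam) = D * e * (gam + D - 1) by rewrite /e; field; lra.
exists (((1 - lam) * D * h - gam * (1 - lam) * c + D * e * k) / (gam + D)).
move=> x y u t s hM hL hu hrho s0.
have {}hM : (gam * lam + D) * x <= (gam * lam + D) * ((1 - lam) * u + y).
  by rewrite ler_wpM2l // addr_ge0 ?mulr_ge0 //; lra.
have {}hL : gam * (1 - lam) * (lam * u + D * t + c) <= gam * (1 - lam) * y.
  by rewrite ler_wpM2l // mulr_ge0 //; lra.
have {}hu : (1 - lam) * D * u <= (1 - lam) * D * h.
  by rewrite ler_wpM2l // mulr_ge0 //; lra.
have Dt : D * (D - 1 + gam * lam) * t <= D * e * (k + (D - 1) * s).
  rewrite De -mulrA ler_wpM2l ?mulr_ge0 ?invr_ge0 //; [nra|lra|lra].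
have De1 : D * e * ((D - 1) * s) <= D * ((D - 1) * s).
  rewrite -mulrA ler_wpM2l //.
  by rewrite -[X in _ <= X]mul1r ler_wpM2r // mulr_ge0 //; lra.
rewrite [(gam + D) * _]mulrC divfK; [lra|rewrite gt_eqF //; lra].
Qed.

Lemma ln_le_powR_bound (K M L Rad rho : R) :
  0 < M -> 0 < L -> 0 < Rad -> 0 < rho ->
  (gam * lam + D) * ln M <= (gam + D) * K + D * (D - 1) * ln Rad
    - D * (gam + D - 1) * ln rho + (gam + D) * ln L ->
  M `^ ((gam * lam + D) / (gam + D)) <=
    expR K * Rad `^ (D * (D - 1) / (gam + D))
      * rho `^ (- (D * (gam + D - 1) / (gam + D))) * L.
Proof.
move=> M0 L0 Rad0 rho0 hln.
have gD : 0 < gam + D by have := D_ge1; case/andP: gam01; lra.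
rewrite -ler_ln ?posrE ?mulr_gt0 ?powR_gt0 ?expR_gt0 //.
rewrite !lnM ?posrE ?mulr_gt0 ?powR_gt0 ?expR_gt0 // expRK !ln_powR -(ler_pM2l gD).
have -> : (gam + D) * ((gam * lam + D) / (gam + D) * ln M) = (gam * lam + D) * ln M.
  by field; rewrite gt_eqF.
by apply: le_trans hln _; rewrite le_eqVlt; apply/orP; left; apply/eqP; field; rewrite gt_eqF.
Qed.

Lemma ln_cube_mass (m dl : R) : 0 < m -> 0 < dl ->
  ln ((m / 4) `^ lam * (dl / D) ^+ d) = lam * (ln m - ln 4) + D * (ln dl - ln D).
Proof.
move=> m0 dl0; have D0 : 0 < D by rewrite ltr0n.
rewrite lnM ?posrE ?powR_gt0 ?exprn_gt0 ?divr_gt0 // ln_powR lnXn ?divr_gt0 //.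
by rewrite !ln_div ?posrE // -[_ *+ d]mulr_natl.
Qed.

Lemma ln_width_bound (Rad rho : R) : 0 <= c0 -> 1 <= Rad -> 0 < rho ->
  rho < (c0 * Rad ^+ d.-1) `^ (gam + D - 1)^-1 ->
  (gam + D - 1) * ln rho < ln c0 + (D - 1) * ln Rad.
Proof.
move=> c0_ge0 Rad1 rho0 hrho; have D1 := D_ge1; have /andP[gam0 _] := gam01.
have Rad0 : 0 < Rad by lra.
have p_gt0 : 0 < (gam + D - 1)^-1 by rewrite invr_gt0; lra.
have c0_gt0 : 0 < c0.
  rewrite lt_def c0_ge0 andbT; apply: contraTneq hrho => ->.
  by rewrite mul0r powR0 ?gt_eqF // -leNgt ltW.
have cR : 0 < c0 * Rad ^+ d.-1 by rewrite mulr_gt0 ?exprn_gt0.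
have : ln rho < ln ((c0 * Rad ^+ d.-1) `^ (gam + D - 1)^-1).
  by rewrite ltr_ln ?posrE ?powR_gt0.
rewrite ln_powR lnM ?posrE ?exprn_gt0 // lnXn //.
have -> : D - 1 = (d.-1)%:R by rewrite /D -subn1 natrB.
by rewrite mulr_natl ltr_pdivlMl; lra.
Qed.

Lemma annulus_power_bound : exists N, forall Rad rho M L,
  0 <= c0 -> 1 <= Rad -> 0 < rho -> rho < (c0 * Rad ^+ d.-1) `^ (gam + D - 1)^-1 ->
  0 <= M -> 0 <= L ->
  (0 < M -> exists2 m, 0 < m <= H & M <= m `^ (1 - lam) * L /\
     (m / 4) `^ lam * (Num.min ((m / (4 * H)) `^ gam^-1 / 2) (rho / 4) / D) ^+ d <= L) ->
  M `^ ((gam * lam + D) / (gam + D)) <=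
    N * Rad `^ (D * (D - 1) / (gam + D))
      * rho `^ (- (D * (gam + D - 1) / (gam + D))) * L.
Proof.
have /andP[gam0 _] := gam01; have /andP[lam0 lam1] := lam01; have D1 := D_ge1.
have gD : 0 < gam + D by lra.
(* Constant terms of ln ((m/4)^lam (dl/D)^d), multiplied by gam in the first
   case, for the two values of the minimum dl. *)
pose cA := - (gam * lam * ln 4) - D * ln (4 * H) - gam * D * ln 2 - gam * D * ln D.
pose cB := - (lam * ln 4) - D * (ln 4 + ln D).
have [KA hA] := holder_case_ln cA (ln c0).
have [KB hB] := width_case_ln cB (ln c0) (ln H).
exists (expR (Num.max KA KB)) => Rad rho M L c0_ge0 Rad1 rho0 hrho M_ge0 L_ge0 mass.
have [M0|M_gt0] := eqVneq M 0.
  rewrite M0 powR0 ?mulr_ge0 ?powR_ge0 ?expR_ge0 // gt_eqF // divr_gt0 //.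
  by rewrite addr_gt0 ?mulr_gt0 //; lra.
have {}M_gt0 : 0 < M by rewrite lt_def M_gt0.
have [m /andP[m0 mH] [hM hL]] := mass M_gt0.
set dl := Num.min _ _ in hL.
have H4 : 0 < 4 * H by rewrite mulr_gt0.
have dl0 : 0 < dl by rewrite lt_min !divr_gt0 // powR_gt0 // divr_gt0.
have L0 : 0 < L.
  by apply: lt_le_trans hL; rewrite mulr_gt0 ?powR_gt0 ?exprn_gt0 ?divr_gt0 ?ltr0n.
apply: ln_le_powR_bound => //; first lra.
have lnM_le : ln M <= (1 - lam) * ln m + ln L.
  have : ln M <= ln (m `^ (1 - lam) * L) by rewrite ler_ln ?posrE ?mulr_gt0 ?powR_gt0.
  by rewrite lnM ?posrE ?powR_gt0 // ln_powR.
have lnL_ge : lam * (ln m - ln 4) + D * (ln dl - ln D) <= ln L.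
  by rewrite -ln_cube_mass // ler_ln ?posrE ?mulr_gt0 ?powR_gt0 ?exprn_gt0 ?divr_gt0 ?ltr0n.
have lnrho := ln_width_bound c0_ge0 Rad1 rho0 hrho.
have lnRad : 0 <= ln Rad by rewrite ln_ge0.
have KAB : (gam + D) * KA <= (gam + D) * Num.max KA KB /\
           (gam + D) * KB <= (gam + D) * Num.max KA KB.
  by split; rewrite ler_pM2l // le_max lexx ?orbT.
have [dlE|dlE] : dl = (m / (4 * H)) `^ gam^-1 / 2 \/ dl = rho / 4.
  by rewrite /dl /Num.min; case: ifP; [left|right].
- have lnLA : (gam * lam + D) * ln m + cA <= gam * ln L.
    rewrite -(ler_pM2l gam0) in lnL_ge; apply: le_trans lnL_ge; rewrite le_eqVlt; apply/orP; left.
    rewrite dlE ln_div ?posrE ?powR_gt0 ?divr_gt0 // ln_powR ln_div ?posrE //.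
    by apply/eqP; rewrite /cA lnM ?posrE //; field; rewrite gt_eqF.
  by have := hA _ _ _ _ _ lnM_le lnLA lnrho; lra.
have lnLB : lam * ln m + D * ln rho + cB <= ln L.
  by move: lnL_ge; rewrite dlE ln_div ?posrE // /cB; lra.
have lnmH : ln m <= ln H by rewrite ler_ln ?posrE //; lra.
by have := hB _ _ _ _ _ lnM_le lnLB lnmH lnrho lnRad; lra.
Qed.

End power_bound.

Lemma Gamma_ge0 (R : realType) (s : R) : 0 <= Gamma s.
Proof. by apply: Rintegral_ge0 => t _; rewrite mulr_ge0 ?powR_ge0 ?expR_ge0. Qed.

Theorem lemma4p2 (R : realType) (gamma lambda : R) (d : nat) (H : R) :
  0 < gamma < 1 -> 0 < lambda < 1 -> (0 < d)%N -> 1 < H ->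
  exists N : R,
  forall (a b : R) (g : d.-tuple R -> R),
    0 <= a -> a < b ->
    (forall x, 0 <= g x) ->
    (forall x, g x <= H) ->
    continuous_Rn g ->
    (forall x y, `|g x - g y| <= H * (dist_Rn x y) `^ gamma) ->
  forall (Rad r : R), 1 < Rad ->
    0 < r ->
    r < Rad / b ->
    r < (b - a)^-1 *
        (2 `^ (- ((gamma + 1) / gamma)) * H `^ (- (d%:R / gamma))
         * Rad ^+ d.-1
         * (d%:R * pi `^ (d%:R / 2) / Gamma (d%:R / 2 + 1)))
          `^ ((gamma + d%:R - 1)^-1) ->
    (Rintegral (@lebesgue_Rn R d) (annulus (Rad + a * r) (Rad + b * r)) g)
        `^ ((gamma * lambda + d%:R) / (gamma + d%:R))
    <= N * Rad `^ ((d%:R * (d%:R - 1)) / (gamma + d%:R))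
         * (r * (b - a)) `^ (- ((d%:R * (gamma + d%:R - 1)) / (gamma + d%:R)))
         * Rintegral (@lebesgue_Rn R d) (annulus (Rad + a * r) (Rad + b * r))
             (fun x => g x `^ lambda).
Proof.
move=> gam01 lam01 d_gt0 H1.
have H0 : 0 < H by lra.
pose c0 := 2 `^ (- ((gamma + 1) / gamma)) * H `^ (- (d%:R / gamma))
  * (d%:R * pi `^ (d%:R / 2) / Gamma (d%:R / 2 + 1)).
have [N hN] := annulus_power_bound c0 gam01 lam01 d_gt0 H0.
exists N => a b g a0 ab g0 gH _ holder Rad r Rad1 r0 _ hr.
have ba0 : 0 < b - a by rewrite subr_gt0.
have c0E : 2 `^ (- ((gamma + 1) / gamma)) * H `^ (- (d%:R / gamma)) * Rad ^+ d.-1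
    * (d%:R * pi `^ (d%:R / 2) / Gamma (d%:R / 2 + 1)) = c0 * Rad ^+ d.-1.
  by rewrite /c0; ring.
rewrite c0E ltr_pdivlMl // [(b - a) * r]mulrC in hr.
apply: (hN _ _ _ _ _ (ltW Rad1) (mulr_gt0 r0 ba0) hr).
- by rewrite /c0 !mulr_ge0 ?powR_ge0 ?invr_ge0 ?Gamma_ge0 ?ler0n.
- by apply: Rintegral_ge0 => x _.
- by apply: Rintegral_ge0 => x _; exact: powR_ge0.
have -> : r * (b - a) = Rad + b * r - (Rad + a * r) by ring.
apply: annulus_holder_estimate => //; first by rewrite addr_ge0 ?mulr_ge0 //; lra.
- by rewrite ltrD2l ltr_pM2r.
- by case/andP: gam01.
- by case/andP: lam01 => ? ?; rewrite !ltW.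
- by move=> x; rewrite g0 gH.
Qed.
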